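(* Let $\widehat{X}=X+\epsilon X_0$ and $\widehat{Y}=Y+\epsilon Y_0$ be dual matrices such that the dual group generalized inverse of $\widehat{X}$ exists. Then $\widehat{X}\leq_{D}^{\#}\widehat{Y}$ if and only if $X\leq^{\#}Y$, $\quad X^{\#}X_0+RX= X^{\#}Y_0+RY$, $\quad XR+X_0X^{\#}= YR+Y_0X^{\#}$, where $R=-X^{\#}X_0X^{\#}+(X^{\#})^2X_0(I-XX^{\#})+(I-XX^{\#})X_0(X^{\#})^2$.
   Context: Dual matrices have the form $X+\epsilon X_0$ with real square matrices $X,X_0$ and dual unit $\epsilon\neq0$, $\epsilon^2=0$. For a dual matrix $\widehat{X}$ of dual index 1, the dual group generalized inverse $\widehat{X}^{\#}$ is the unique dual matrix $\widehat{Z}$ (if it exists) with $\widehat{X}\widehat{Z}\widehat{X}=\widehat{X}$, $\widehat{Z}\widehat{X}\widehat{Z}=\widehat{Z}$, $\widehat{X}\widehat{Z}=\widehat{Z}\widehat{X}$; when it exists, $\widehat{X}^{\#}=X^{\#}+\epsilon R$ with $R$ as in the claim, where $X^{\#}$ is the group inverse of $X$. The D-group order is defined by $\widehat{X}\leq_{D}^{\#}\widehat{Y}$ iff $\widehat{X}^{\#}\widehat{X}=\widehat{X}^{\#}\widehat{Y}$ and $\widehat{X}\widehat{X}^{\#}=\widehat{Y}\widehat{X}^{\#}$. For real matrices, the group partial order $X\leq^{\#}Y$ means $X^{\#}X=X^{\#}Y$ and $XX^{\#}=YX^{\#}$. *)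

From mathcomp Require Import all_boot all_order all_algebra.
Set Implicit Arguments. Unset Strict Implicit. Unset Printing Implicit Defensive.
Import GRing.Theory Num.Theory.
Local Open Scope ring_scope.

(* Dual matrices X + eps X0 are represented as pairs (X, X0)
   of n x n matrices over a real field R. *)
Section Dual.
Variables (R : realFieldType) (n : nat).

Definition dualmx := ('M[R]_n * 'M[R]_n)%type.

(* (A + eps A0)(B + eps B0) = AB + eps (A B0 + A0 B), since eps^2 = 0 *)
Definition dmul (A B : dualmx) : dualmx :=
  (A.1 *m B.1, A.1 *m B.2 + A.2 *m B.1).

Definition is_group_inverse (X Z : 'M[R]_n) : Prop :=
  [/\ X *m Z *m X = X, Z *m X *m Z = Z & X *m Z = Z *m X].

Definition is_dual_group_inverse (Xh Zh : dualmx) : Prop :=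
  [/\ dmul (dmul Xh Zh) Xh = Xh, dmul (dmul Zh Xh) Zh = Zh
    & dmul Xh Zh = dmul Zh Xh].

Definition group_order (X Y : 'M[R]_n) : Prop :=
  exists Xg, is_group_inverse X Xg /\
    Xg *m X = Xg *m Y /\ X *m Xg = Y *m Xg.

Definition dgroup_order (Xh Yh : dualmx) : Prop :=
  exists Zh, is_dual_group_inverse Xh Zh /\
    dmul Zh Xh = dmul Zh Yh /\ dmul Xh Zh = dmul Yh Zh.

Definition Rterm (X X0 Xg : 'M[R]_n) : 'M[R]_n :=
  - (Xg *m X0 *m Xg) + Xg *m Xg *m X0 *m (1%:M - X *m Xg)
  + (1%:M - X *m Xg) *m X0 *m (Xg *m Xg).

End Dual.

(** In any ring, an idempotent [p] splits every [z] into the four Peirce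
    blocks [p z p], [p z q], [q z p], [q z q] with [q = 1 - p].  If [g] is
    the group inverse of [x] and [p = x g], the second components of the
    three defining identities of a dual group inverse [g + eps z0] of
    [x + eps x0] determine each block of [z0]: [q z0 q = 0],
    [p z0 p = - g x0 g], [p z0 q = g^2 x0 q] and [q z0 p = q x0 g^2].
    Summing them gives [z0 = R], so the dual group inverse is unique, and the
    D-group order splits componentwise into the three stated conditions. *)

From mathcomp Require Import all_boot all_order all_algebra.
Set Implicit Arguments.
Unset Strict Implicit.
Unset Printing Implicit Defensive.
Import GRing.Theory.
Local Open Scope ring_scope.

Lemma peirce_decomposition {T : pzRingType} (e z : T) :
  z = e * z * e + e * z * (1 - e) + (1 - e) * z * e + (1 - e) * z * (1 - e).
Proof.
have {1}-> : z = (e + (1 - e)) * z * (e + (1 - e)).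
  by rewrite addrC subrK mul1r mulr1.
set f := 1 - e.
by rewrite !(mulrDl, mulrDr) addrACA !addrA.
Qed.

Section GroupInverse.
Variables (T : pzRingType) (x g : T).
Hypotheses (xgx : x * g * x = x) (gxg : g * x * g = g) (xgC : x * g = g * x).

Lemma ginv_unique (h : T) :
  x * h * x = x -> h * x * h = h -> x * h = h * x -> h = g.
Proof.
move=> xhx hxh xhC.
have xhE : x * h = x * g.
  by rewrite -{1}xgx xgC -!mulrA xhC (mulrA x h x) xhx -xgC.
by rewrite -hxh -mulrA xhE mulrA -xhC xhE xgC gxg.
Qed.

End GroupInverse.

Section DualGroupInverseTail.
(* [p] stands for [x g = g x]; keeping it a variable stops [mulrA] from
   splitting it apart. *)
Variables (T : pzRingType) (x g p : T).
Hypotheses (xgE : x * g = p) (gxE : g * x = p) (pxE : p * x = x) (pgE : p * g = g).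

Let xpE : x * p = x. Proof. by rewrite -gxE mulrA xgE pxE. Qed.
Let gpE : g * p = g. Proof. by rewrite -xgE mulrA gxE pgE. Qed.
Let ppE : p * p = p. Proof. by rewrite -{2}xgE mulrA pxE xgE. Qed.

Let rfix_mul_compl {a : T} : a * p = a -> a * (1 - p) = 0.
Proof. by move=> ap; rewrite mulrBr mulr1 ap subrr. Qed.

Let lfix_compl_mul {a : T} : p * a = a -> (1 - p) * a = 0.
Proof. by move=> pa; rewrite mulrBl mul1r pa subrr. Qed.

Variables (x0 z0 : T).
(* The dual parts of [Zh Xh Zh = Zh] and [Xh Zh = Zh Xh] for
   [Xh = x + eps x0] and [Zh = g + eps z0]. *)
Hypotheses (zxz : g * x * z0 + (g * x0 + z0 * x) * g = z0)
  (xzC : x * z0 + x0 * g = g * x0 + z0 * x).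

Let zxzE : p * z0 + g * x0 * g + z0 * p = z0.
Proof. by rewrite -{3}zxz gxE mulrDl -(mulrA z0) xgE addrA. Qed.

Lemma dual_tail_qq : (1 - p) * z0 * (1 - p) = 0.
Proof.
have qz : (1 - p) * z0 = (1 - p) * z0 * p.
  rewrite -{1}zxzE !mulrDr !mulrA.
  by rewrite (lfix_compl_mul ppE) (lfix_compl_mul pgE) !mul0r !add0r.
by rewrite qz -mulrA (rfix_mul_compl ppE) mulr0.
Qed.

Lemma dual_tail_pp : p * z0 * p = - (g * x0 * g).
Proof.
have := congr1 (fun a => p * a) zxzE.
rewrite /= !mulrDr !mulrA ppE pgE -addrA -{3}[p * z0]addr0.
by move/addrI/addr0_eq <-.
Qed.

Lemma dual_tail_pq : p * z0 * (1 - p) = g * g * x0 * (1 - p).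
Proof.
have := congr1 (fun a => g * a * (1 - p)) xzC.
rewrite /= !(mulrDr g) !(mulrDl _ _ (1 - p)) !mulrA gxE -!(mulrA _ _ (1 - p)).
rewrite (rfix_mul_compl gpE) (rfix_mul_compl xpE) !mulr0 !addr0.
by rewrite !mulrA.
Qed.

Lemma dual_tail_qp : (1 - p) * z0 * p = (1 - p) * x0 * (g * g).
Proof.
have := congr1 (fun a => (1 - p) * a * g) xzC.
rewrite /= !(mulrDr (1 - p)) !(mulrDl _ _ g) !mulrA.
rewrite (lfix_compl_mul pxE) (lfix_compl_mul pgE) !mul0r !add0r.
by rewrite -!mulrA xgE.
Qed.

Lemma dual_ginv_tail :
  z0 = - (g * x0 * g) + g * g * x0 * (1 - p) + (1 - p) * x0 * (g * g).
Proof.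
by rewrite {1}(peirce_decomposition p z0) dual_tail_pp dual_tail_pq
  dual_tail_qp dual_tail_qq addr0.
Qed.

End DualGroupInverseTail.

Section DualMatrices.
Variables (R : realFieldType) (n : nat).

Lemma group_inverse_unique (X G H : 'M[R]_n) :
  is_group_inverse X G -> is_group_inverse X H -> H = G.
Proof.
rewrite /is_group_inverse !mulmxE => -[xgx gxg xgC] [xhx hxh xhC].
exact: (ginv_unique xgx gxg xgC xhx hxh xhC).
Qed.

Lemma dual_group_inverse_unique (X X0 G : 'M[R]_n) (Zh : dualmx R n) :
  is_dual_group_inverse (X, X0) Zh -> is_group_inverse X G ->
  Zh = (G, Rterm X X0 G).
Proof.
case: Zh => Z Z0; rewrite /is_dual_group_inverse /is_group_inverse /Rterm.
rewrite /dmul /= !mulmxE idmxE => -[[xzx _] [zxz zxz0] [xzC xzC0]].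
case=> xgx gxg xgC; have <- := ginv_unique xgx gxg xgC xzx zxz xzC.
have pgE : X * Z * Z = Z by rewrite xzC zxz.
by rewrite {1}(dual_ginv_tail (erefl (X * Z)) (esym xzC) xzx pgE zxz0 xzC0).
Qed.

End DualMatrices.

Theorem mainTheorem12 (R : realFieldType) (n : nat) (X X0 Y Y0 Xg : 'M[R]_n) :
  (exists Zh : dualmx R n, is_dual_group_inverse (X, X0) Zh) ->
  is_group_inverse X Xg ->
  let Rm := Rterm X X0 Xg in
  dgroup_order (X, X0) (Y, Y0) <->
  [/\ group_order X Y,
      Xg *m X0 + Rm *m X = Xg *m Y0 + Rm *m Y
    & X *m Rm + X0 *m Xg = Y *m Rm + Y0 *m Xg].
Proof.
move=> [Zh dginvZh] ginvXg Rm.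
have ZhE : Zh = (Xg, Rm) := dual_group_inverse_unique dginvZh ginvXg.
split.
- case=> _ [/dual_group_inverse_unique/(_ ginvXg) -> []].
  rewrite /dmul /= => -[XgXY e1] [XXgY e2].
  by split=> //; exists Xg.
- case=> [[G [ginvG [GXY XGY]]] e1 e2].
  rewrite (group_inverse_unique ginvXg ginvG) in GXY XGY.
  exists Zh; split=> //.
  by rewrite ZhE /dmul /= GXY XGY e1 e2.
Qed.
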